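(* Let $\gamma$ be a generator of $\mathbb{F}_{q^m}^*$ and let $\beta_1,\dots,\beta_m\in\mathbb{F}_{q^m}$ be linearly independent over $\mathbb{F}_q$. Let $n=(q-1)m$ and $1\le k\le n$. For $\ell\in\{0,1,\dots,q-2\}$ let $M_\ell$ be the $k\times m$ matrix over $\mathbb{F}_{q^m}$ with $(i,j)$ entry $\gamma^{\ell(1+q+\cdots+q^{i-1})}\beta_j^{q^i}$ for $i=0,\dots,k-1$, $j=1,\dots,m$ (row $i=0$ is $(\beta_1,\dots,\beta_m)$), and let $M=[M_0\,|\,M_1\,|\,\cdots\,|\,M_{q-2}]$ be the $k\times n$ matrix. Then for every nonzero $\lambda\in\mathbb{F}_{q^m}^k$, $\sum_{\ell=0}^{q-2}\mathrm{rk}_{\mathbb{F}_q}(\lambda^T M_\ell)\ge n-k+1$; i.e., $M$ generates a maximum sum-rank distance code with respect to the partition of $[n]$ into the $q-1$ blocks of size $m$ corresponding to $M_0,\dots,M_{q-2}$.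
   Context: Fix a basis of $\mathbb{F}_{q^m}$ over $\mathbb{F}_q$. For a row vector $z=(z_1,\dots,z_m)\in\mathbb{F}_{q^m}^m$, $\mathrm{rk}_{\mathbb{F}_q}(z)$ denotes the rank over $\mathbb{F}_q$ of the $m\times m$ matrix over $\mathbb{F}_q$ whose $j$-th column is the coordinate vector of $z_j$ in the fixed basis (this does not depend on the basis). *)

From HB Require Import structures.
From mathcomp Require Import all_boot all_order all_algebra all_field.
Set Implicit Arguments. Unset Strict Implicit. Unset Printing Implicit Defensive.
Import GRing.Theory.
Local Open Scope ring_scope.

(* F plays the role of F_q, L the role of F_{q^m} (a finite-dimensional
   extension of the finite field F).  The fixed F-basis of L is vbasis fullv. *)

Definition coord_mx (F : finFieldType) (L : fieldExtType F) (p : nat)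
  (z : 'rV[L]_p) : 'M[F]_(\dim {:L}, p) :=
  \matrix_(i < \dim {:L}, j < p) coord (vbasis {:L}) i (z ord0 j).

Definition rkFq (F : finFieldType) (L : fieldExtType F) (p : nat)
  (z : 'rV[L]_p) : nat := \rank (coord_mx z).

Definition Mblock (F : finFieldType) (L : fieldExtType F) (k m : nat)
  (gamma : L) (beta : 'I_m -> L) (l : nat) : 'M[L]_(k, m) :=
  \matrix_(i < k, j < m)
    (gamma ^+ (l * \sum_(t < i) #|F| ^ t)%N * beta j ^+ (#|F| ^ i)%N).

From HB Require Import structures.
From mathcomp Require Import all_boot all_order all_algebra all_field.
From mathcomp Require Import zify ring.
Set Implicit Arguments. Unset Strict Implicit. Unset Printing Implicit Defensive.
Import GRing.Theory passmx.
Local Open Scope ring_scope.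

(* Write q = #|F| and, for a in L and lam = (lam_0, ...,
   lam_{k-1}), consider the F-linear map
     f_{a,lam}(y) = sum_i lam_i N_i(a) y^(q^i),  N_i(a) = a^(1 + q + ... + q^(i-1)).
   The j-th entry of lambda^T M_l is f_{gamma^l,lambda}(beta_j); since the beta_j
   span L, the F-span of these entries is the image of f_{gamma^l,lambda}, so
   rk_F(lambda^T M_l) >= m - dim ker f_{gamma^l,lambda}.  The theorem thus
   reduces to the kernel bound
     sum_{l < q-1} dim ker f_{gamma^l,lambda} <= k - 1   (lambda != 0),
   proved by induction on k.  If x != 0 lies in the kernel for l = l0, then
   b = gamma^l0 x^(q-1) gives a right division, valid for all a at once:
     f_{a,lam} = f_{a,mu} o H_{a,b},   H_{a,b}(y) = a y^q - b y,
   with mu nonzero of length k - 1.  The kernel of H_{a,b} is at most a line,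
   and it is zero unless a and b lie in the same coset of the group of
   (q-1)-th powers; since gamma generates L^*, the powers gamma^l (l < q - 1)
   lie in distinct such cosets, so each step adds at most 1 to the sum. *)

Section Frobenius.
Variables (F : finFieldType) (L : fieldExtType F).
Local Notation q := #|F|.

Lemma q_gt1 : (1 < q)%N. Proof. exact: finNzRing_gt1. Qed.

(* Powers of q are powers of the characteristic, so y |-> y^(q^j) is additive. *)
Lemma pchar_nat_expq j : [pchar L].-nat (q ^ j)%N.
Proof.
have [p p_pr pF] := finPcharP F.
rewrite (card_pprimeChar pF) -expnM pnatX (pnatE _ p_pr).
by rewrite (pchar_lalg L) pF.
Qed.

Lemma expqD j (x y : L) : (x + y) ^+ (q ^ j) = x ^+ (q ^ j) + y ^+ (q ^ j).
Proof. exact/exprDn_pchar/pchar_nat_expq. Qed.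

Lemma expqN j (x : L) : (- x) ^+ (q ^ j) = - x ^+ (q ^ j).
Proof. exact/exprNn_pchar/pchar_nat_expq. Qed.

(* Scalars of F are fixed by y |-> y^q, so y |-> y^(q^j) is F-linear. *)
Lemma expqZ j (c : F) (x : L) : (c *: x) ^+ (q ^ j) = c *: x ^+ (q ^ j).
Proof.
have cq : c ^+ (q ^ j) = c.
  by elim: j => [|j IHj]; rewrite ?expr1 // expnSr exprM IHj expf_card.
rewrite -[c *: x]mulr_algl -[c *: x ^+ _]mulr_algl exprMn.
by rewrite -(in_algE L) -rmorphXn cq.
Qed.

Lemma fixed_in_base (z : L) : z ^+ q = z -> z \in 1%VS.
Proof. by move=> zq; rewrite (Fermat's_little_theorem 1%AS z) /= dimv1 expn1 zq. Qed.

End Frobenius.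

Section TwistedMaps.
Variables (F : finFieldType) (L : fieldExtType F).
Local Notation q := #|F|.

Definition qnorm (a : L) (i : nat) : L := a ^+ (\sum_(t < i) q ^ t)%N.

Lemma qnorm0 a : qnorm a 0 = 1. Proof. by rewrite /qnorm big_ord0. Qed.

Lemma qnormS a i : qnorm a i.+1 = qnorm a i * a ^+ (q ^ i).
Proof. by rewrite /qnorm big_ord_recr /= exprD. Qed.

Lemma qnorm_neq0 a i : a != 0 -> qnorm a i != 0.
Proof. exact: expf_neq0. Qed.

Lemma qnorm_twist a x i : qnorm (a * x ^+ (q - 1)) i * x = qnorm a i * x ^+ (q ^ i).
Proof.
elim: i => [|i IHi]; first by rewrite !qnorm0 !mul1r.
rewrite !qnormS exprMn -exprM mulrAC IHi -!mulrA; congr (_ * _).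
rewrite mulrCA -exprD; congr (_ * _ ^+ _).
by rewrite expnS; have := q_gt1 F; nia.
Qed.

Definition qmap (c : nat -> L) (k : nat) (y : L) : L :=
  \sum_(i < k) c i * y ^+ (q ^ i).

Lemma qmap_linear c k : linear (qmap c k).
Proof.
move=> s y z; rewrite /qmap scaler_sumr -big_split /=; apply: eq_bigr => i _.
by rewrite expqD expqZ mulrDr scalerAr.
Qed.

HB.instance Definition _ c k := GRing.isSemilinear.Build F L L _ (qmap c k)
  (GRing.semilinear_linear (qmap_linear c k)).

Definition qlin (c : nat -> L) (k : nat) : 'End(L) := linfun (qmap c k).

Lemma qlinE c k y : qlin c k y = qmap c k y.
Proof. exact: lfunE. Qed.

Definition twisted (a : L) (lam : nat -> L) (i : nat) : L := lam i * qnorm a i.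

(* f_{a,lam}(x) = g(a x^(q-1)) x with g(b) = sum_i lam_i N_i(b): the roots x != 0
   of f_{a,lam} correspond to the roots b of g in the coset of a. *)
Lemma twisted_root a lam k x :
  qmap (twisted a lam) k x = (\sum_(i < k) lam i * qnorm (a * x ^+ (q - 1)) i) * x.
Proof.
rewrite /qmap mulr_suml; apply: eq_bigr => i _.
by rewrite -mulrA qnorm_twist mulrA.
Qed.

Definition Hlin (a b : L) : 'End(L) := qlin (nth 0 [:: - b; a]) 2.

Lemma HlinE a b y : Hlin a b y = a * y ^+ q - b * y.
Proof. by rewrite qlinE /qmap !big_ord_recl big_ord0 /= expn0 expn1 expr1; ring. Qed.

Definition shift (mu : nat -> L) (i : nat) : L := if i is i'.+1 then mu i' else 0.

Lemma qmap_Hlin a b mu k y : mu k = 0 ->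
  qmap (twisted a mu) k (Hlin a b y) =
  qmap (twisted a (fun i => shift mu i - mu i * b ^+ (q ^ i))) k.+1 y.
Proof.
move=> muk; rewrite HlinE.
transitivity (\sum_(i < k.+1) twisted a (shift mu) i * y ^+ (q ^ i)
            - \sum_(i < k.+1) mu i * b ^+ (q ^ i) * qnorm a i * y ^+ (q ^ i)).
  rewrite big_ord_recl big_ord_recr /= muk /twisted /= !mul0r add0r addr0.
  rewrite /qmap -sumrB; apply: eq_bigr => i _.
  rewrite expqD expqN !exprMn -!exprM -expnS qnormS /=; ring.
by rewrite /qmap -sumrB; apply: eq_bigr => i _; rewrite /twisted; ring.
Qed.

(* The right quotient of lam = (lam_0, ..., lam_k) by the factor attached to b:
   mu_j = (sum_(j < i <= k) lam_i N_i(b)) / N_(j+1)(b). *)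
Definition rquot (b : L) (lam : nat -> L) (k j : nat) : L :=
  (\sum_(j.+1 <= i < k.+1) lam i * qnorm b i) / qnorm b j.+1.

Lemma rquot_last (b : L) (lam : nat -> L) (k : nat) : rquot b lam k k = 0.
Proof. by rewrite /rquot big_geq // mul0r. Qed.

Lemma rquot_coef (b : L) (lam : nat -> L) (k : nat) :
  b != 0 -> \sum_(i < k.+1) lam i * qnorm b i = 0 ->
  forall i, (i < k.+1)%N ->
    lam i = shift (rquot b lam k) i - rquot b lam k i * b ^+ (q ^ i).
Proof.
move=> b0 root i ltik.
pose S j := \sum_(j <= t < k.+1) lam t * qnorm b t.
have S_split : S i = lam i * qnorm b i + S i.+1 by rewrite /S big_ltn.
have -> : rquot b lam k i * b ^+ (q ^ i) = S i.+1 / qnorm b i.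
  by rewrite /rquot qnormS invfM mulrA mulfVK // expf_neq0.
case: i ltik S_split => [|i] _ /= S_split.
  have S0 : S 0%N = 0 by rewrite /S big_mkord.
  rewrite qnorm0 divr1 sub0r; apply/eqP; rewrite -addr_eq0.
  by rewrite -(mulr1 (lam 0%N)) -(qnorm0 b) -S_split S0.
rewrite /rquot -/(S i.+1) S_split mulrDl mulfK ?qnorm_neq0 //; ring.
Qed.

Definition nonzero_upto (lam : nat -> L) (k : nat) : Prop :=
  exists2 i, (i < k)%N & lam i != 0.

Section Factor.
Variables (a0 x : L) (lam : nat -> L) (k : nat).
Hypotheses (a0_neq0 : a0 != 0) (x_neq0 : x != 0).
Hypothesis x_root : qmap (twisted a0 lam) k.+1 x = 0.
Let b := a0 * x ^+ (q - 1).
Let mu := rquot b lam k.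

Let mu_coef i : (i < k.+1)%N -> lam i = shift mu i - mu i * b ^+ (q ^ i).
Proof.
apply: rquot_coef (_ : b != 0) _ i; first by rewrite mulf_neq0 ?expf_neq0.
by apply: (mulIf x_neq0); rewrite mul0r -twisted_root.
Qed.

Lemma twisted_factor a :
  qlin (twisted a lam) k.+1 = (qlin (twisted a mu) k \o Hlin a b)%VF.
Proof.
apply/lfunP => y; rewrite comp_lfunE !(qlinE (twisted _ _)) qmap_Hlin.
  by apply: eq_bigr => i _; rewrite /twisted -mu_coef.
exact: rquot_last.
Qed.

Lemma rquot_nonzero : nonzero_upto lam k.+1 -> nonzero_upto mu k.
Proof.
case=> i ltik lami.
have [/existsP [j muj] | /existsPn mu0] := boolP [exists j : 'I_k, mu j != 0].
  by exists j.
have mu_eq0 j : (j <= k)%N -> mu j = 0.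
  rewrite leq_eqVlt => /predU1P [-> | ltjk]; first exact: rquot_last.
  exact/eqP/negPn/(mu0 (Ordinal ltjk)).
case/eqP: lami; rewrite mu_coef // mu_eq0 // mul0r subr0.
by case: i ltik => //= i /ltnW; apply: mu_eq0.
Qed.
End Factor.

Lemma Hlin_root a b y : y \in lker (Hlin a b) -> y != 0 -> a * y ^+ (q - 1) = b.
Proof.
rewrite memv_ker HlinE subr_eq0 => /eqP ayq y0.
by apply: (mulIf y0); rewrite -mulrA -exprSr subn1 prednK // ltnW // q_gt1.
Qed.

(* Two nonzero roots of H_{a,b} have a quotient fixed by y |-> y^q, hence in F. *)
Lemma dim_ker_Hlin a b : a != 0 -> (\dim (lker (Hlin a b)) <= 1)%N.
Proof.
move=> a0; set K := lker (Hlin a b); set x := vpick K.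
have [/eqP | x0] := eqVneq x 0; first by rewrite vpick0 => /eqP ->; rewrite dimv0.
suff KsubX : (K <= <[x]>)%VS.
  by apply: leq_trans (dimvS KsubX) _; rewrite dim_vline leq_b1.
apply/subvP => y Ky; have [-> | y0] := eqVneq y 0; first exact: mem0v.
have yx_fixed : (y / x) ^+ q = y / x.
  have := Hlin_root (memv_pick K) x0; rewrite -(Hlin_root Ky y0) => /(mulfI a0) e.
  rewrite -[in LHS](subnK (ltnW (q_gt1 F))) exprD exprMn exprVn e.
  by rewrite mulfV ?expf_neq0 // mul1r expr1.
have /vlineP [c yx] := fixed_in_base yx_fixed.
by apply/vlineP; exists c; rewrite -(divfK x0 y) yx -scalerAl mul1r.
Qed.

Lemma dim_lker_comp (g h : 'End(L)) :
  (\dim (lker (g \o h)%VF) <= \dim (lker g) + \dim (lker h))%N.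
Proof.
have := limg_ker_dim (g \o h)%VF fullv; have := limg_ker_dim h fullv.
have := limg_ker_dim g (h @: fullv); rewrite limg_comp !(capvC fullv) !capvf.
have : (\dim (h @: fullv :&: lker g) <= \dim (lker g))%N by apply/dimvS/capvSr.
lia.
Qed.

Definition distinct_cosets (gamma : L) : Prop :=
  forall (l l' : 'I_(q - 1)) (x y : L), x != 0 -> y != 0 ->
    gamma ^+ l * x ^+ (q - 1) = gamma ^+ l' * y ^+ (q - 1) -> l = l'.

Section KernelBound.
Variable gamma : L.
Hypothesis powers_neq0 : forall l : 'I_(q - 1), gamma ^+ l != 0.
Hypothesis cosets : distinct_cosets gamma.

Definition block_op (lam : nat -> L) (k l : nat) : 'End(L) :=
  qlin (twisted (gamma ^+ l) lam) k.

Lemma dim_ker_Hlin_coset (l l0 : 'I_(q - 1)) (x : L) : x != 0 ->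
  (\dim (lker (Hlin (gamma ^+ l) (gamma ^+ l0 * x ^+ (q - 1)))) <= (l == l0))%N.
Proof.
move=> x0; have [-> | neq_l] := eqVneq l l0; first exact: dim_ker_Hlin.
rewrite leqn0 dimv_eq0; apply/eqP/vspaceP => y; rewrite memv0.
apply/idP/eqP => [Ky | ->]; last exact: mem0v.
apply: contraNeq neq_l => y0; apply/eqP/(cosets y0 x0).
exact: Hlin_root Ky y0.
Qed.

Lemma ker_bound k (lam : nat -> L) : nonzero_upto lam k ->
  (\sum_(l < q - 1) \dim (lker (block_op lam k l)) <= k.-1)%N.
Proof.
elim: k lam => [|k IHk] lam lam_nz; first by case: lam_nz.
have [/existsP [l0 ker_nz] | /existsPn ker0] :=
  boolP [exists l : 'I_(q - 1), \dim (lker (block_op lam k.+1 l)) != 0%N]; last first.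
  by rewrite big1 // => l _; apply/eqP/negPn/ker0.
set x := vpick (lker (block_op lam k.+1 l0)).
have x0 : x != 0 by rewrite vpick0 -dimv_eq0.
have x_root : qmap (twisted (gamma ^+ l0) lam) k.+1 x = 0.
  by rewrite -qlinE; apply/eqP; rewrite -memv_ker memv_pick.
set mu := rquot (gamma ^+ l0 * x ^+ (q - 1)) lam k.
have mu_nz : nonzero_upto mu k := rquot_nonzero (powers_neq0 l0) x0 x_root lam_nz.
have k_gt0 : (0 < k)%N by case: mu_nz => i /(leq_ltn_trans (leq0n i)).
have step (l : 'I_(q - 1)) : (\dim (lker (block_op lam k.+1 l)) <=
    \dim (lker (block_op mu k l)) + (l == l0))%N.
  rewrite /block_op (twisted_factor (powers_neq0 l0) x0 x_root).
  exact: leq_trans (dim_lker_comp _ _) (leq_add (leqnn _) (dim_ker_Hlin_coset _ _ x0)).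
apply: (@leq_trans (\sum_(l < q - 1) (\dim (lker (block_op mu k l)) + (l == l0))));
  first exact: leq_sum.
have one_l0 : (\sum_(l < q - 1) (l == l0) = 1)%N.
  by rewrite (bigD1 l0) //= eqxx big1 // => l /negPf ->.
rewrite big_split /= one_l0 addn1.
by apply: leq_ltn_trans (IHk mu mu_nz) _; rewrite ltn_predL.
Qed.
End KernelBound.

End TwistedMaps.

Section Generator.
Variables (F : finFieldType) (L : fieldExtType F).
Local Notation q := #|F|.
Variable gamma : L.
Hypothesis gamma_gen : forall x : L, x != 0 -> exists e : nat, x = gamma ^+ e.
Local Notation N := (q ^ \dim {:L}).-1.

(* Degenerate case: 0 generates L^* only when L^* = {1}, forcing q = 2. *)
Lemma zero_generator_q : gamma = 0 -> (q <= 2)%N.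
Proof.
move=> gamma0; have sub01 : [set: F] \subset [set 0; 1].
  apply/subsetP => c _; rewrite !inE; apply/norP => [[c0 c1]].
  have cA0 : (c%:A : L) != 0 by rewrite scaler_eq0 oner_eq0 orbF.
  have [[|e] ce] := gamma_gen cA0; last by rewrite ce gamma0 expr0n eqxx in cA0.
  by move: c1; rewrite -(fmorph_eq1 (in_alg L)) /= ce expr0 eqxx.
by rewrite -cardsT (leq_trans (subset_leq_card sub01)) // cards2; case: (_ != _).
Qed.

Section NonZero.
Hypothesis gamma_neq0 : gamma != 0.

Lemma N_gt0 : (0 < N)%N.
Proof. by rewrite -subn1 subn_gt0 -{1}(expn0 q) ltn_exp2l ?q_gt1 // adim_gt0. Qed.

Lemma generator_expN : gamma ^+ N = 1.
Proof.
have full : gamma ^+ (q ^ \dim {:L}) = gamma.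
  by have := Fermat's_little_theorem (aspacef L) gamma; rewrite memvf => /esym/eqP.
apply: (mulfI gamma_neq0); rewrite mulr1 -exprS prednK //.
by rewrite expn_gt0 (ltnW (q_gt1 F)).
Qed.

(* gamma has multiplicative order N = #|L^*|: its first j powers cover L^*. *)
Lemma generator_order j : gamma ^+ j = 1 -> (0 < j)%N -> (N <= j)%N.
Proof.
move=> gj1 j_gt0; pose T := finvect_type L.
have card_nonzero : #|[set~ (0 : T)]| = N.
  by rewrite cardsC1 -(@card_vspacef F T (Vector.class _)) card_vspace.
have sub : [set~ (0 : T)] \subset [set (gamma ^+ i : T) | i : 'I_j].
  apply/subsetP => x; rewrite !inE => /gamma_gen [e ->]; apply/imsetP.
  exists (Ordinal (ltn_pmod e j_gt0)) => //=.
  by rewrite {1}(divn_eq e j) exprD mulnC exprM gj1 expr1n mul1r.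
rewrite -card_nonzero (leq_trans (subset_leq_card sub)) //.
by rewrite (leq_trans (leq_imset_card _ _)) // card_ord.
Qed.

Lemma generator_exp_mod u v : gamma ^+ u = gamma ^+ v -> u = v %[mod N].
Proof.
wlog le_uv : u v / (u <= v)%N => [hw | guv].
  by case: (leqP u v) => [/hw | /ltnW /hw h /esym /h]; [apply | move=> ->].
have g1 : gamma ^+ (v - u) = 1.
  by apply: (mulfI (expf_neq0 u gamma_neq0)); rewrite -exprD subnKC // -guv mulr1.
have r1 : gamma ^+ ((v - u) %% N) = 1.
  move: g1; rewrite {1}(divn_eq (v - u) N) exprD mulnC exprM.
  by rewrite generator_expN expr1n mul1r.
apply/eqP; rewrite eq_sym eqn_mod_dvd // /dvdn.
apply: contraTT (ltn_pmod (v - u) N_gt0); rewrite -lt0n -leqNgt.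
exact: generator_order.
Qed.
End NonZero.

Lemma generator_powers_neq0 (l : 'I_(q - 1)) : gamma ^+ l != 0.
Proof.
have [gamma0 | /expf_neq0 //] := eqVneq gamma 0.
have l0 : nat_of_ord l = 0%N by have := zero_generator_q gamma0; have := ltn_ord l; lia.
by rewrite l0 expr0 oner_neq0.
Qed.

(* Exponents of gamma are determined modulo N, hence modulo q - 1, which
   divides N; the exponent of gamma^l x^(q-1) is therefore l modulo q - 1. *)
Lemma generator_cosets : distinct_cosets gamma.
Proof.
move=> l l' x y x0 y0 cosets_eq; apply: ord_inj; move: cosets_eq.
have [gamma0 | gamma_neq0] := eqVneq gamma 0.
  by move=> _; have := zero_generator_q gamma0; have := ltn_ord l; have := ltn_ord l'; lia.
have [[ex ->] [ey ->]] := (gamma_gen x0, gamma_gen y0).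
rewrite -!exprM -!exprD => /(generator_exp_mod gamma_neq0) /(congr1 (modn^~ (q - 1)%N)).
rewrite !modn_dvdm ?subn1 ?dvdn_pred_predX // !(addnC l) !(addnC l') !modnMDl.
by rewrite !modn_small.
Qed.
End Generator.

Section Blocks.
Variables (F : finFieldType) (L : fieldExtType F).

Lemma span_le_rkFq p (z : 'rV[L]_p) :
  (\dim <<[seq z ord0 j | j <- enum 'I_p]>> <= rkFq z)%N.
Proof.
pose e := vbasis {:L}; have e_basis : basis_of fullv e := vbasisP fullv.
set A := coord_mx z; set B := row_base A^T.
pose w := [seq vecof e (row t B) | t <- enum 'I_(\rank A^T)].
suff sub : (<<[seq z ord0 j | j <- enum 'I_p]>> <= <<w>>)%VS.
  apply: leq_trans (dimvS sub) _; apply: leq_trans (dim_span w) _.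
  by rewrite size_map size_enum_ord /rkFq mxrank_tr.
apply/span_subvP => _ /mapP [j _ ->].
have -> : z ord0 j = vecof e (row j A^T).
  by rewrite -[LHS](rVofK e_basis); congr vecof; apply/rowP => i; rewrite !mxE.
have /submxP [u ->] : (row j A^T <= B)%MS by rewrite eq_row_base row_sub.
rewrite mulmx_sum_row linear_sum; apply: rpred_sum => t _; rewrite linearZ.
by apply/rpredZ/memv_span/map_f; rewrite mem_enum.
Qed.

Definition coefs k (lambda : 'rV[L]_k) (i : nat) : L :=
  if insub i is Some j then lambda ord0 j else 0.

Lemma coefsE k (lambda : 'rV[L]_k) (j : 'I_k) : coefs lambda j = lambda ord0 j.
Proof. by rewrite /coefs valK. Qed.

Lemma coefs_nonzero k (lambda : 'rV[L]_k) : lambda != 0 -> nonzero_upto (coefs lambda) k.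
Proof.
move=> lambda_neq0; have [/existsP [j lj] | /existsPn lambda0] :=
  boolP [exists j, lambda ord0 j != 0]; first by exists j; rewrite ?coefsE.
by case/eqP: lambda_neq0; apply/rowP => j; rewrite mxE; apply/eqP/negPn/lambda0.
Qed.

Lemma Mblock_entry k m (gamma : L) (beta : 'I_m -> L) (lambda : 'rV[L]_k) l j :
  (lambda *m Mblock k gamma beta l) ord0 j = block_op gamma (coefs lambda) k l (beta j).
Proof.
rewrite qlinE !mxE /qmap; apply: eq_bigr => i _.
by rewrite mxE /twisted coefsE /qnorm -exprM mulrA.
Qed.

(* Rank-nullity: rk_F(lambda^T M_l) + dim ker f_l >= m when beta spans L. *)
Lemma block_rank k m (gamma : L) (beta : 'I_m -> L) (lambda : 'rV[L]_k) l :
  \dim {:L} = m -> free [seq beta j | j <- enum 'I_m] ->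
  (m <= rkFq (lambda *m Mblock k gamma beta l)
        + \dim (lker (block_op gamma (coefs lambda) k l)))%N.
Proof.
move=> dimL free_beta; set f := block_op _ _ _ _.
have span_beta : <<[seq beta j | j <- enum 'I_m]>>%VS = fullv.
  by apply/eqP; rewrite eqEdim subvf /= (eqnP free_beta) size_map size_enum_ord dimL.
have := span_le_rkFq (lambda *m Mblock k gamma beta l).
rewrite (eq_map (Mblock_entry _ _ _ _)) map_comp -limg_span span_beta -/f.
have := limg_ker_dim f fullv; rewrite capvC capvf dimL; lia.
Qed.
End Blocks.

Theorem theoremF2 (F : finFieldType) (L : fieldExtType F) (m k : nat)
  (gamma : L) (beta : 'I_m -> L) :
  \dim {:L} = m ->
  (* gamma generates the multiplicative group L^* *)
  (forall x : L, x != 0 -> exists e : nat, x = gamma ^+ e) ->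
  (* beta_1, ..., beta_m are linearly independent over F *)
  free [seq beta j | j <- enum 'I_m] ->
  (1 <= k <= (#|F| - 1) * m)%N ->
  forall lambda : 'rV[L]_k, lambda != 0 ->
    ((#|F| - 1) * m - k + 1 <=
      \sum_(l < #|F| - 1) rkFq (lambda *m Mblock k gamma beta l))%N.
Proof.
move=> dimL gamma_gen free_beta /andP [k_gt0 k_le_n] lambda lambda_neq0.
have kernels := ker_bound (generator_powers_neq0 gamma_gen)
  (generator_cosets gamma_gen) (coefs_nonzero lambda_neq0).
have ranks : ((#|F| - 1) * m <= \sum_(l < #|F| - 1) rkFq (lambda *m Mblock k gamma beta l)
    + \sum_(l < #|F| - 1) \dim (lker (block_op gamma (coefs lambda) k l)))%N.
  rewrite -big_split /= -[X in (X * m)%N]card_ord -sum_nat_const.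
  by apply: leq_sum => l _; apply: block_rank.
move: kernels ranks; set ker_sum := \sum_(l < _) \dim _.
set rk_sum := \sum_(l < _) rkFq _; rewrite -subn1; lia.
Qed.
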